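(* Let $\Sigma$ be an $n$-simplex with vertices $a_1,\ldots,a_{n+1}$ in a real normed linear space $X$, let $1\le\nu\le n+1$, and let $F=\mathsf{co}\{a_j:1\le j\le n+1,\ j\neq\nu\}$ be the face of $\Sigma$ opposite $a_\nu$. Let $x=\sum_{k=1}^{n+1}\lambda_ka_k\in\Sigma$ with $\lambda\in\Delta_n$. Then $\rho(x,F)>0$ if and only if $\lambda_\nu>0$.
   Context: The setting is Bishop's constructive mathematics (intuitionistic logic). Vectors $v_1,\ldots,v_n$ are linearly independent if $\|\sum_i\mu_iv_i\|>0$ whenever $\sum_i|\mu_i|>0$; points $a_1,\ldots,a_{n+1}$ are affinely independent if $a_k-a_{n+1}$ ($1\le k\le n$) are linearly independent; the $n$-simplex with (affinely independent) vertices $a_1,\ldots,a_{n+1}$ is their convex hull. $\Delta_n=\{\lambda\in\mathbf{R}^{n+1}:\lambda_k\ge0,\sum_k\lambda_k=1\}$. $\rho(x,F)=\inf\{\|x-y\|:y\in F\}$. *)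

From HB Require Import structures.
From mathcomp Require Import all_boot all_order all_algebra.
From mathcomp Require Import all_classical all_reals all_analysis.
Set Implicit Arguments. Unset Strict Implicit. Unset Printing Implicit Defensive.
Import Order.TTheory GRing.Theory Num.Theory.
Import numFieldNormedType.Exports.
Local Open Scope classical_set_scope.
Local Open Scope ring_scope.

(* Vectors v_1..v_m are linearly independent (Bishop-style):
   ||sum mu_i v_i|| > 0 whenever sum |mu_i| > 0. *)
Definition lin_indep (R : realType) (X : normedModType R) (m : nat)
  (v : 'I_m -> X) : Prop :=
  forall mu : 'I_m -> R, 0 < \sum_(i < m) `|mu i| ->
    0 < `|\sum_(i < m) mu i *: v i|.

Definition aff_indep (R : realType) (X : normedModType R) (n : nat)
  (a : 'I_n.+1 -> X) : Prop :=
  lin_indep (fun k : 'I_n => a (lift ord_max k) - a ord_max).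

Definition Delta (R : realType) (n : nat) : set ('I_n.+1 -> R) :=
  [set lam | (forall k, 0 <= lam k) /\ \sum_(k < n.+1) lam k = 1].
Arguments Delta : clear implicits.

Definition co (R : realType) (X : normedModType R) (S : set X) : set X :=
  [set y | exists m (p : 'I_m -> X) (mu : 'I_m -> R),
      (forall i, S (p i)) /\ (forall i, 0 <= mu i) /\
      \sum_(i < m) mu i = 1 /\ y = \sum_(i < m) mu i *: p i].

Definition face (R : realType) (X : normedModType R) (n : nat)
  (a : 'I_n.+1 -> X) (nu : 'I_n.+1) : set X :=
  co [set a j | j in [set j | j != nu]].

Definition rho (R : realType) (X : normedModType R) (x : X) (F : set X) : R :=
  inf [set `|x - y| | y in F].

From HB Require Import structures.
From mathcomp Require Import all_boot all_order all_algebra.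
From mathcomp Require Import all_classical all_reals all_analysis.
Import Order.TTheory GRing.Theory Num.Theory.
Import numFieldNormedType.Exports.
Set Implicit Arguments. Unset Strict Implicit. Unset Printing Implicit Defensive.
Local Open Scope classical_set_scope.
Local Open Scope ring_scope.

(* Minimizing ||Σ μ_i v_i|| over the compact l1-sphere turns linear
   independence into a bound c Σ|μ_i| <= ||Σ μ_i v_i|| with c > 0.  A point
   y = Σ β_k a_k of the face has β_ν = 0, so x - y is a combination of the
   a_k with total weight 0 whose ν-th weight is λ_ν; by the bound applied to
   the differences a_k - a_{n+1}, ||x - y|| >= (c/2) λ_ν.  Conversely, if
   λ_ν = 0 then x itself lies in the face. *)

Definition l1_sphere (R : realType) (m : nat) : set 'rV[R]_m :=
  [set u | \sum_(i < m) `|u ord0 i| = 1].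
Arguments l1_sphere : clear implicits.

Lemma compact_l1_sphere (R : realType) (m : nat) : compact (l1_sphere R m).
Proof.
apply: bounded_closed_compact.
- exists 1; split; first exact: num_real.
  move=> M M1 u Su; apply: (le_trans _ (ltW M1)).
  rewrite /Num.norm /= mx_normrE; apply/bigmax_leP; split => // -[i j] _ /=.
  by rewrite ord1 -Su (bigD1 j) //= lerDl sumr_ge0.
- apply: (@preimage_closed _ _ (fun u : 'rV[R]_m => \sum_(i < m) `|u ord0 i|) [set 1]);
    last exact: closed_eq.
  move=> u _; apply: continuous_big => [|i _ w]; first exact: add_continuous.
  by apply: continuous_comp; [exact: coord_continuous | exact: norm_continuous].
Qed.

Lemma continuous_lin_comb (R : realType) (X : normedModType R) (m : nat)
    (v : 'I_m -> X) :
  continuous (fun u : 'rV[R]_m => \sum_(i < m) u ord0 i *: v i).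
Proof.
apply: continuous_big => [|i _ u]; first exact: add_continuous.
by apply: continuousZr_tmp; exact: coord_continuous.
Qed.

Lemma lin_indep_norm_ge (R : realType) (X : normedModType R) (m : nat)
    (v : 'I_m -> X) :
  lin_indep v -> exists2 c : R, 0 < c &
    forall mu : 'I_m -> R, c * \sum_(i < m) `|mu i| <= `|\sum_(i < m) mu i *: v i|.
Proof.
case: m v => [|m] v v_indep.
  by exists 1 => // mu; rewrite !big_ord0 mulr0.
pose f (u : 'rV[R]_m.+1) := `|\sum_i u ord0 i *: v i|.
have f_gt0 u : l1_sphere R m.+1 u -> 0 < f u by move=> Su; apply: v_indep; rewrite Su.
have sphere_neq0 : l1_sphere R m.+1 !=set0.
  exists (\row_i (i == ord0)%:R); rewrite /l1_sphere /= (bigD1 ord0) //= big1.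
    by rewrite mxE eqxx normr1 addr0.
  by move=> i /negbTE i_neq0; rewrite mxE i_neq0 normr0.
have f_cont : {within l1_sphere R m.+1, continuous f}.
  apply: continuous_subspaceT => u.
  apply: continuous_comp; [exact: continuous_lin_comb | exact: norm_continuous].
have [u0 /set_mem Su0 u0_min] := compact_EVT_min sphere_neq0 (@compact_l1_sphere R m.+1) f_cont.
exists (f u0); first exact: f_gt0.
move=> mu; set s := \sum_i `|mu i|.
have [->|s_neq0] := eqVneq s 0; first by rewrite mulr0.
have s_gt0 : 0 < s by rewrite lt_def s_neq0 sumr_ge0.
pose u : 'rV[R]_m.+1 := \row_i (s^-1 * mu i).
have Su : l1_sphere R m.+1 u.
  rewrite /l1_sphere /=; under eq_bigr do rewrite mxE normrM gtr0_norm ?invr_gt0 //.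
  by rewrite -mulr_sumr mulVf.
have -> : `|\sum_i mu i *: v i| = s * f u.
  rewrite /f; under [in RHS]eq_bigr do rewrite mxE -scalerA.
  by rewrite -scaler_sumr normrZ gtr0_norm ?invr_gt0 // mulrA mulfV // mul1r.
by rewrite mulrC ler_pM2l //; apply: u0_min; rewrite inE.
Qed.

Lemma face_affine_comb (R : realType) (X : normedModType R) (n : nat)
    (a : 'I_n.+1 -> X) (nu : 'I_n.+1) (y : X) :
  face a nu y -> exists beta : 'I_n.+1 -> R,
    [/\ beta nu = 0, \sum_k beta k = 1 & y = \sum_k beta k *: a k].
Proof.
case=> m [p [mu [p_face [_ [mu1 ->]]]]].
have /all_sig [j /all_and2 [j_neq p_j]] : forall i, {j | j != nu /\ p i = a j}.
  by move=> i; apply: cid; case: (p_face i) => j /= j_neq <-; exists j.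
exists (fun k => \sum_(i < m | j i == k) mu i); split.
- by apply: big_pred0 => i; apply/negbTE/j_neq.
- by rewrite -mu1 [RHS](partition_big j predT).
- under [RHS]eq_bigr do rewrite scaler_suml.
  under [LHS]eq_bigr do rewrite p_j.
  rewrite [LHS](partition_big j predT) //=.
  by apply: eq_bigr => k _; apply: eq_bigr => i /eqP <-.
Qed.

Lemma last_weight_sum0 (R : realType) (n : nat) (beta : 'I_n.+1 -> R) :
  \sum_k beta k = 0 -> beta ord_max = - \sum_(k < n) beta (lift ord_max k).
Proof. by rewrite (bigD1_ord ord_max) //= => /eqP; rewrite addr_eq0 => /eqP. Qed.

Lemma comb_sum0_diff (R : realType) (X : normedModType R) (n : nat)
    (a : 'I_n.+1 -> X) (beta : 'I_n.+1 -> R) :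
  \sum_k beta k = 0 ->
  \sum_k beta k *: a k =
    \sum_(k < n) beta (lift ord_max k) *: (a (lift ord_max k) - a ord_max).
Proof.
move=> /last_weight_sum0 beta_max; rewrite (bigD1_ord ord_max) //= beta_max.
rewrite scaleNr scaler_suml addrC -sumrB.
by apply: eq_bigr => k _; rewrite scalerBr.
Qed.

Lemma normr_weight_sum0 (R : realType) (n : nat) (beta : 'I_n.+1 -> R)
    (nu : 'I_n.+1) :
  \sum_k beta k = 0 -> `|beta nu| <= 2 * \sum_(k < n) `|beta (lift ord_max k)|.
Proof.
move=> /last_weight_sum0 beta_max.
have le_nu : `|beta nu| <= \sum_k `|beta k| by rewrite (bigD1 nu) //= lerDl sumr_ge0.
apply: (le_trans le_nu); rewrite (bigD1_ord ord_max) //= mulr2n mulrDl mul1r lerD2r.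
by rewrite beta_max normrN ler_norm_sum.
Qed.

Lemma aff_indep_norm_ge (R : realType) (X : normedModType R) (n : nat)
    (a : 'I_n.+1 -> X) :
  aff_indep a -> exists2 c : R, 0 < c & forall (beta : 'I_n.+1 -> R) nu,
    \sum_k beta k = 0 -> c * `|beta nu| <= `|\sum_k beta k *: a k|.
Proof.
move=> /lin_indep_norm_ge [c c_gt0 c_le]; exists (c / 2) => [|beta nu beta0].
  by rewrite divr_gt0.
rewrite comb_sum0_diff //; apply: le_trans (c_le _).
rewrite -mulrA ler_pM2l // mulrC ler_pdivrMr // mulrC.
exact: normr_weight_sum0.
Qed.

Lemma face_neq0 (R : realType) (X : normedModType R) (n : nat)
    (a : 'I_n.+1 -> X) (nu : 'I_n.+1) :
  (0 < n)%N -> face a nu !=set0.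
Proof.
move=> n_gt0; have [j j_neq] : exists j : 'I_n.+1, j != nu.
  case: (eqVneq nu ord0) => [->|nu_neq0]; last by exists ord0; rewrite eq_sym.
  by exists ord_max; rewrite -val_eqE /= -lt0n.
exists (a j), 1%N, (fun _ => a j), (fun _ => 1); split; first by move=> _; exists j.
by rewrite !big_ord1 scale1r.
Qed.

Lemma mem_face_comb (R : realType) (X : normedModType R) (n : nat)
    (a : 'I_n.+1 -> X) (nu : 'I_n.+1) (lam : 'I_n.+1 -> R) :
  Delta R n lam -> lam nu = 0 -> face a nu (\sum_k lam k *: a k).
Proof.
move=> [lam_ge0 lam1] lam_nu.
exists n, (fun k => a (lift nu k)), (fun k => lam (lift nu k)); split.
  by move=> k; exists (lift nu k) => //=; rewrite eq_sym neq_lift.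
split=> //; split; last by rewrite (bigD1_ord nu) //= lam_nu scale0r add0r.
by move: lam1; rewrite (bigD1_ord nu) //= lam_nu add0r.
Qed.

Lemma rho_le0 (R : realType) (X : normedModType R) (x : X) (F : set X) :
  F x -> rho x F <= 0.
Proof.
move=> Fx; rewrite -(normr0 X) -(subrr x); apply: ge_inf; last by exists x.
by exists 0 => _ [z _ <-].
Qed.

Lemma rho_ge (R : realType) (X : normedModType R) (x : X) (F : set X) (c : R) :
  F !=set0 -> (forall y, F y -> c <= `|x - y|) -> c <= rho x F.
Proof.
move=> [y Fy] c_le; apply: lb_le_inf; first by exists `|x - y|, y.
by move=> _ [z Fz <-]; exact: c_le.
Qed.

Theorem corollary16 (R : realType) (X : normedModType R) (n : nat)
  (a : 'I_n.+1 -> X) (nu : 'I_n.+1) (lam : 'I_n.+1 -> R) (x : X) :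
  (0 < n)%N -> aff_indep a -> lam \in Delta R n ->
  x = \sum_(k < n.+1) lam k *: a k ->
  (0 < rho x (face a nu) <-> 0 < lam nu).
Proof.
move=> n_gt0 a_indep /set_mem lam_Delta ->; split.
  move=> rho_gt0; rewrite lt_def lam_Delta.1 andbT; apply/eqP => lam_nu.
  have := rho_le0 (mem_face_comb a lam_Delta lam_nu).
  by move=> /(lt_le_trans rho_gt0); rewrite ltxx.
move=> lam_nu_gt0; have [c c_gt0 c_le] := aff_indep_norm_ge a_indep.
apply: (lt_le_trans (mulr_gt0 c_gt0 lam_nu_gt0)).
apply: rho_ge (face_neq0 a nu n_gt0) _ => _ /face_affine_comb [beta [beta_nu beta1 ->]].
rewrite -sumrB; under eq_bigr do rewrite -scalerBl.
have -> : lam nu = `|lam nu - beta nu| by rewrite beta_nu subr0 ger0_norm ?lam_Delta.1.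
by apply: (c_le (fun k => lam k - beta k)); rewrite sumrB lam_Delta.2 beta1 subrr.
Qed.
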